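(* Let $F \ge 3$ be an integer. The number of numerical semigroups with multiplicity $4$ and Frobenius number $F$ equals: $\left(\frac{F-1}{4}\right)^2$ if $F\equiv 1 \pmod 4$ and $5\le F\le 9$; $\frac{F^2-14F+141}{16}$ if $F\equiv 1\pmod 4$ and $13\le F\le 17$; $-\frac32\lfloor\frac{F+1}{12}\rfloor^2 + \frac14\lfloor\frac{F+1}{12}\rfloor F - \frac34\lfloor\frac{F+1}{12}\rfloor + \lfloor\frac{F+5}{8}\rfloor^2 - \frac14\lfloor\frac{F+5}{8}\rfloor F + \frac14\lfloor\frac{F+5}{8}\rfloor + \frac{5F}{16} - \frac{11}{32} + \frac{F^2}{32}$ if $F\equiv 1\pmod 4$ and $F\ge 21$; $\left(\frac F4 - \lfloor\frac{F+1}{8}\rfloor + \frac12\right)\left(\frac F4 - \lfloor\frac{F+5}{8}\rfloor + \frac12\right)$ if $F\equiv 2\pmod 4$; $\frac{F^2}{32} + \frac{7F}{16} - \frac{19}{32} + \frac34\lfloor\frac{F+1}{8}\rfloor + \lfloor\frac{F+1}{8}\rfloor^2 + \frac14\lfloor\frac{F}{12}\rfloor F - \frac94\lfloor\frac F{12}\rfloor - \frac32\lfloor\frac F{12}\rfloor^2 - \frac14\lfloor\frac{F+1}{8}\rfloor F$ if $F\equiv 3\pmod 4$; and $0$ otherwise.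
   Context: A numerical semigroup is a subset $S \subseteq \mathbb{N}$ containing $0$, closed under addition, with $\mathbb{N}\setminus S$ finite. Its multiplicity is $\min(S\setminus\{0\})$ and its Frobenius number is the largest integer not in $S$. *)

From HB Require Import structures.
From mathcomp Require Import all_boot all_order all_algebra.
From mathcomp Require Import boolp classical_sets cardinality.
Set Implicit Arguments. Unset Strict Implicit. Unset Printing Implicit Defensive.
Import Order.TTheory GRing.Theory Num.Theory.
Local Open Scope classical_set_scope.

Definition numerical_semigroup (S : set nat) : Prop :=
  S 0%N /\ (forall x y, S x -> S y -> S (x + y)%N) /\ finite_set (~` S).

Definition is_multiplicity (S : set nat) (m : nat) : Prop :=
  (0 < m)%N /\ S m /\ (forall x, (0 < x)%N -> S x -> (m <= x)%N).

Definition is_frobenius (S : set nat) (f : nat) : Prop :=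
  ~ S f /\ (forall x, ~ S x -> (x <= f)%N).

Definition NS_mult_frob (m f : nat) : set (set nat) :=
  [set S | numerical_semigroup S /\ is_multiplicity S m /\ is_frobenius S f].

Local Open Scope ring_scope.

Definition ns4_formula (F : nat) : rat :=
  let f : rat := F%:R in
  let a : rat := ((F + 1) %/ 12)%N%:R in
  let b : rat := ((F + 5) %/ 8)%N%:R in
  let c : rat := ((F + 1) %/ 8)%N%:R in
  let d : rat := (F %/ 12)%N%:R in
  if (F %% 4 == 1)%N then
    if (5 <= F <= 9)%N then ((f - 1) / 4) ^+ 2
    else if (13 <= F <= 17)%N then (f ^+ 2 - 14 * f + 141) / 16
    else if (21 <= F)%N then
      - (3/2) * a ^+ 2 + (1/4) * a * f - (3/4) * a + b ^+ 2 - (1/4) * b * f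
      + (1/4) * b + 5 * f / 16 - 11/32 + f ^+ 2 / 32
    else 0
  else if (F %% 4 == 2)%N then
    (f / 4 - c + 1/2) * (f / 4 - b + 1/2)
  else if (F %% 4 == 3)%N then
    f ^+ 2 / 32 + 7 * f / 16 - 19/32 + (3/4) * c + c ^+ 2 + (1/4) * d * f
    - (9/4) * d - (3/2) * d ^+ 2 - (1/4) * c * f
  else 0.

From HB Require Import structures.
From mathcomp Require Import all_boot all_order all_algebra.
From mathcomp Require Import finmap boolp classical_sets cardinality.
From mathcomp Require Import zify ring.
Import Order.TTheory GRing.Theory Num.Theory.

Set Implicit Arguments.
Unset Strict Implicit.
Unset Printing Implicit Defensive.

Local Open Scope classical_set_scope.
Local Open Scope card_scope.

(* A numerical semigroup of multiplicity 4 is determined by its least elements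
   4a+1, 4b+2, 4c+3 in the nonzero residue classes mod 4 (its Apery set), and
   the triples (a, b, c) that occur are exactly the solutions of Kunz's linear
   inequalities; the Frobenius number is the largest of the three minus 4.
   For a given F the residue of F mod 4 fixes one coordinate, so the semigroups
   are the lattice points of a planar polygon.  Its row lengths are piecewise
   affine with breakpoints at thirds and halves of F/4, so the count is a sum
   of arithmetic progressions, whence the floor terms of the formula. *)

Definition kunz_semigroup (a b c : nat) : set nat :=
  [set x | [|| x %% 4 == 0, (x %% 4 == 1) && (4 * a + 1 <= x),
              (x %% 4 == 2) && (4 * b + 2 <= x) | (x %% 4 == 3) && (4 * c + 3 <= x)]].

(* Multiplicity 4 (a, b, c > 0) and closure under the sums w1 + w1, w1 + w2,
   w3 + w3, w2 + w3 of the Apery elements w1 = 4a+1, w2 = 4b+2, w3 = 4c+3;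
   the remaining sums w1 + w3 and w2 + w2 lie in 4N. *)
Definition kunz_coords (a b c : nat) : bool :=
  [&& 0 < a, 0 < b, 0 < c, b <= 2 * a, c <= a + b, b <= 2 * c + 1 & a <= b + c + 1].

Definition kunz_frobenius (a b c : nat) : nat :=
  maxn (4 * a + 1) (maxn (4 * b + 2) (4 * c + 3)) - 4.

Section KunzSemigroup.

Variables a b c : nat.
Hypothesis abc : kunz_coords a b c.

Lemma kunz_semigroup_numerical : numerical_semigroup (kunz_semigroup a b c).
Proof.
move: abc; rewrite /kunz_coords /kunz_semigroup => kabc.
split=> //; split=> [x y /=|]; first lia.
apply: (@sub_finite_set _ _ `I_(4 * (a + b + c) + 4)); last exact: finite_II.
by move=> x /= Sx; apply: contrapT; lia.
Qed.

Lemma kunz_semigroup_multiplicity : is_multiplicity (kunz_semigroup a b c) 4.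
Proof.
move: abc; rewrite /kunz_coords /is_multiplicity /kunz_semigroup /= => ?.
by split=> //; split=> // x; lia.
Qed.

Lemma kunz_semigroup_frobenius :
  is_frobenius (kunz_semigroup a b c) (kunz_frobenius a b c).
Proof.
move: abc; rewrite /kunz_coords /is_frobenius /kunz_semigroup /kunz_frobenius /= => ?.
by split=> [|x]; lia.
Qed.

End KunzSemigroup.

Lemma kunz_semigroup_le a b c a' b' c' :
  kunz_semigroup a b c `<=` kunz_semigroup a' b' c' -> [/\ a' <= a, b' <= b & c' <= c].
Proof.
move=> sub; have := sub (4 * a + 1); have := sub (4 * b + 2); have := sub (4 * c + 3).
by rewrite /kunz_semigroup /=; split; lia.
Qed.

Lemma kunz_semigroup_inj a b c a' b' c' :
  kunz_semigroup a b c = kunz_semigroup a' b' c' -> (a, b, c) = (a', b', c').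
Proof.
move=> E; have [] := @kunz_semigroup_le a b c a' b' c'; first by rewrite E.
have [] := @kunz_semigroup_le a' b' c' a b c; first by rewrite E.
by move=> *; congr (_, _, _); apply/eqP; rewrite eqn_leq; apply/andP.
Qed.

Section NumericalSemigroup.

Variable S : set nat.
Hypothesis nsS : numerical_semigroup S.

Lemma numerical_semigroup_cofinite : exists B, forall x, B <= x -> S x.
Proof.
have [_ [_ /finite_seqP[s CS]]] := nsS.
exists (\max_(y <- s) y).+1 => x ltx; apply: contrapT => Sx.
have : x \in s by have : (~` S) x by []; rewrite CS.
by move=> /(@leq_bigmax_seq _ _ xpredT id)/(_ isT); rewrite leqNgt ltx.
Qed.

Lemma numerical_semigroup_mul m k : S m -> S (m * k).
Proof.
have [S0 [SD _]] := nsS; move=> Sm.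
by elim: k => [|k IHk]; rewrite ?muln0 // mulnS; apply: SD.
Qed.

Lemma apery_elem m i : i < m ->
  exists w, [/\ S w, w %% m = i & forall x, S x -> x %% m = i -> w <= x].
Proof.
move=> ltim; have [B SB] := numerical_semigroup_cofinite.
have exP : exists x, `[< S x >] && (x %% m == i).
  exists (m * B + i); apply/andP; split; first by apply/asboolP; apply: SB; nia.
  by rewrite mulnC modnMDl modn_small.
have [w /andP[/asboolP Sw /eqP wi] minw] := ex_minnP exP.
exists w; split=> // x Sx xi; apply: minw.
by apply/andP; split; [apply/asboolP | apply/eqP].
Qed.

End NumericalSemigroup.

Lemma kunz_coords_exist S : numerical_semigroup S -> is_multiplicity S 4 ->
  exists a b c, kunz_coords a b c /\ S = kunz_semigroup a b c.
Proof.
move=> nsS [_ [S4 min4]]; have [S0 [SD _]] := nsS.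
have [w1 [Sw1 w1E w1min]] := apery_elem nsS (isT : 1 < 4).
have [w2 [Sw2 w2E w2min]] := apery_elem nsS (isT : 2 < 4).
have [w3 [Sw3 w3E w3min]] := apery_elem nsS (isT : 3 < 4).
have S_above w y : S w -> w <= y -> y %% 4 = w %% 4 -> S y.
  move=> Sw wy yw; have -> : y = w + 4 * ((y - w) %/ 4) by lia.
  by apply: SD => //; apply: numerical_semigroup_mul.
have SE : S = kunz_semigroup (w1 %/ 4) (w2 %/ 4) (w3 %/ 4).
  apply/seteqP; split=> x; rewrite /kunz_semigroup /= => Sx.
    by have := w1min x Sx; have := w2min x Sx; have := w3min x Sx; lia.
  case/or4P: Sx => [/eqP|/andP[/eqP ? ?]|/andP[/eqP ? ?]|/andP[/eqP ? ?]].
  - by move=> x0; apply: (S_above 0) => //; rewrite x0.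
  - by apply: (S_above w1) => //; lia.
  - by apply: (S_above w2) => //; lia.
  - by apply: (S_above w3) => //; lia.
have [w14 w24 w34] : [/\ 3 < w1, 3 < w2 & 3 < w3] by split; apply: min4 => //; lia.
exists (w1 %/ 4), (w2 %/ 4), (w3 %/ 4); split=> //.
have := SD _ _ Sw1 Sw1; have := SD _ _ Sw1 Sw2; have := SD _ _ Sw3 Sw3.
have := SD _ _ Sw2 Sw3; rewrite SE /kunz_semigroup /kunz_coords /=; lia.
Qed.

Lemma is_frobenius_unique S f g : is_frobenius S f -> is_frobenius S g -> f = g.
Proof. by move=> [Sf fmax] [Sg gmax]; apply/eqP; rewrite eqn_leq fmax ?gmax. Qed.

Definition kunz_triples (F : nat) : set (nat * nat * nat) :=
  [set t | kunz_coords t.1.1 t.1.2 t.2 /\ kunz_frobenius t.1.1 t.1.2 t.2 = F].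

Lemma NS_mult4_frobE F :
  NS_mult_frob 4 F = (fun t => kunz_semigroup t.1.1 t.1.2 t.2) @` kunz_triples F.
Proof.
apply/seteqP; split=> [S [nsS [m4S FS]] | _ [[[a b] c] /= [abc <-] <-]].
  have [a [b [c [abc SE]]]] := kunz_coords_exist nsS m4S.
  exists (a, b, c) => //; split=> //=.
  by apply: (is_frobenius_unique (kunz_semigroup_frobenius abc)); rewrite -SE.
split; first exact: kunz_semigroup_numerical.
by split; [apply: kunz_semigroup_multiplicity | apply: kunz_semigroup_frobenius].
Qed.

Lemma card_NS_mult4_frob F : NS_mult_frob 4 F #= kunz_triples F.
Proof.
rewrite NS_mult4_frobE; apply: inj_card_eq => [[[a b] c]] [[a' b'] c'] _ _ /=.
exact: kunz_semigroup_inj.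
Qed.

Lemma card_uniq_seq (T : choiceType) (s : seq T) : uniq s -> [set` s] #= `I_(size s).
Proof.
move=> uniq_s; have : #|` [fset x in s]%fset| = size s by rewrite card_fseq undup_id.
move/card_eq_fsetP; congr (_ #= _); apply/seteqP; split=> x /=; by rewrite inE.
Qed.

Definition lattice_region (L U : nat) (lo hi : nat -> nat) : set (nat * nat) :=
  [set p | L <= p.1 <= U /\ lo p.1 <= p.2 <= hi p.1].

Lemma card_lattice_region L U lo hi :
  lattice_region L U lo hi #= `I_(\sum_(L <= x < U.+1) ((hi x).+1 - lo x)).
Proof.
pose s := [seq (x, y) | x <- index_iota L U.+1, y <- index_iota (lo x) (hi x).+1].
have -> : lattice_region L U lo hi = [set` s].
  apply/seteqP; split=> [[x y] [] /= xLU yx | _ /= /allpairsPdep[x [y [+ + ->]]]].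
    by apply: allpairs_f_dep; rewrite mem_index_iota; lia.
  by rewrite !mem_index_iota /lattice_region /=; split; lia.
have -> : \sum_(L <= x < U.+1) ((hi x).+1 - lo x) = size s.
  by rewrite size_allpairs_dep sumnE big_map; apply: eq_bigr => x _; rewrite size_iota.
apply: card_uniq_seq; apply: allpairs_uniq_dep => [|x _|]; rewrite ?iota_uniq //.
by move=> [x y] [x' y'] _ _ /= [-> ->].
Qed.

Lemma kunz_triples_0mod4 F : F %% 4 = 0 -> kunz_triples F = set0.
Proof.
move=> F0; apply/seteqP; split=> // [[[a b] c]] [/=].
by rewrite /kunz_coords /kunz_frobenius => abc abcF; exfalso; lia.
Qed.

Lemma card_kunz_triples_1mod4 F M : F = 4 * M + 1 ->
  kunz_triples F #= lattice_region 1 M (fun c => maxn 1 (M - c)) (fun c => minn M (2 * c + 1)).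
Proof.
move=> FM; set R := lattice_region _ _ _ _.
have -> : kunz_triples F = (fun p => (M.+1, p.2, p.1)) @` R.
  apply/seteqP; split=> [[[a b] c] [/= abc abcF] | _ [[c b] [/= cM bc] <-]].
    rewrite /kunz_coords /kunz_frobenius in abc abcF.
    have aM : a = M.+1 by lia.
    by exists (c, b); rewrite ?aM //= /R /lattice_region /=; lia.
  by rewrite /kunz_triples /kunz_coords /kunz_frobenius /=; split; lia.
by apply: inj_card_eq => [[? ?]] [? ?] _ _ [-> ->].
Qed.

Lemma card_kunz_triples_2mod4 F K : F + 2 = 4 * K -> 1 < K ->
  kunz_triples F #= lattice_region ((K + 1) %/ 2) K (fun=> K %/ 2) (fun=> K.-1).
Proof.
move=> FK K2; set R := lattice_region _ _ _ _.
have -> : kunz_triples F = (fun p => (p.1, K, p.2)) @` R.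
  apply/seteqP; split=> [[[a b] c] [/= abc abcF] | _ [[a c] [/= aK ca] <-]].
    rewrite /kunz_coords /kunz_frobenius in abc abcF.
    have bK : b = K by lia.
    by exists (a, c); rewrite ?bK //= /R /lattice_region /=; lia.
  by rewrite /kunz_triples /kunz_coords /kunz_frobenius /=; split; lia.
by apply: inj_card_eq => [[? ?]] [? ?] _ _ [-> ->].
Qed.

Lemma card_kunz_triples_3mod4 F K : F + 1 = 4 * K ->
  kunz_triples F #= lattice_region 1 K (fun a => maxn 1 (K - a)) (fun a => minn K (2 * a)).
Proof.
move=> FK; set R := lattice_region _ _ _ _.
have -> : kunz_triples F = (fun p => (p.1, p.2, K)) @` R.
  apply/seteqP; split=> [[[a b] c] [/= abc abcF] | _ [[a b] [/= aK ba] <-]].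
    rewrite /kunz_coords /kunz_frobenius in abc abcF.
    have cK : c = K by lia.
    by exists (a, b); rewrite ?cK //= /R /lattice_region /=; lia.
  by rewrite /kunz_triples /kunz_coords /kunz_frobenius /=; split; lia.
by apply: inj_card_eq => [[? ?]] [? ?] _ _ [-> ->].
Qed.

Local Open Scope ring_scope.

(* The affine law is stated as [g x + ga = al * x + be] to avoid truncated
   subtraction. *)
Lemma natr_sum_affine {R : numFieldType} (lo hi al be ga : nat) (g : nat -> nat) :
  (lo <= hi)%N -> (forall x, lo <= x < hi -> g x + ga = al * x + be)%N ->
  (\sum_(lo <= x < hi) g x)%:R =
    (hi%:R - lo%:R) * (be%:R - ga%:R) + al%:R * (hi%:R * (hi%:R - 1) - lo%:R * (lo%:R - 1)) / 2 :> R.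
Proof.
elim: hi => [|hi IHhi] lohi gE.
  by move: lohi; rewrite leqn0 big_geq // => /eqP ->; ring.
have [lohi'|hilo] := leqP lo hi; last first.
  have -> : lo = hi.+1 by lia.
  by rewrite big_geq //; ring.
have ghi : (g hi + ga = al * hi + be)%N by apply: gE; lia.
rewrite big_nat_recr //= natrD IHhi //; last by move=> x xhi; apply: gE; lia.
have -> : (g hi)%:R = al%:R * hi%:R + be%:R - ga%:R :> R.
  by rewrite -natrM -natrD -ghi natrD addrK.
by rewrite -addn1 natrD; field.
Qed.

Lemma region_size_3mod4 F K : (F + 1 = 4 * K)%N -> (0 < K)%N ->
  (\sum_(1 <= a < K.+1) ((minn K (2 * a)).+1 - maxn 1 (K - a)))%:R = ns4_formula F.
Proof.
move=> FK K0; set p := ((K - 1) %/ 3)%N; set q := (K %/ 2)%N.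
rewrite (@big_cat_nat _ _ _ p.+1) 1?(@big_cat_nat _ _ _ q.+1 p.+1) 1?(@big_cat_nat _ _ _ K q.+1); try lia.
rewrite /= !natrD.
rewrite (natr_sum_affine (al:=0) (be:=0) (ga:=0)); try lia.
rewrite (natr_sum_affine (al:=3) (be:=1) (ga:=K)); try lia.
rewrite (natr_sum_affine (al:=1) (be:=1) (ga:=0)); try lia.
rewrite (natr_sum_affine (al:=0) (be:=K) (ga:=0)); try lia.
have FR : F%:R = 4 * K%:R - 1 :> rat by rewrite -natrM -FK natrD addrK.
have F3 : (F %% 4 = 3)%N by lia.
rewrite /ns4_formula F3 /=.
have -> : ((F + 1) %/ 8)%N = q by lia.
have -> : (F %/ 12)%N = p by lia.
by rewrite FR; field.
Qed.

Lemma region_size_2mod4 F K : (F + 2 = 4 * K)%N -> (1 < K)%N ->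
  (\sum_((K + 1) %/ 2 <= a < K.+1) (K.-1.+1 - K %/ 2))%:R = ns4_formula F.
Proof.
move=> FK K2; rewrite sum_nat_const_nat.
rewrite (_ : K.+1 - (K + 1) %/ 2 = K - (K - 1) %/ 2)%N; last by lia.
rewrite (_ : K.-1.+1 = K); last by lia.
rewrite natrM !natrB; try lia.
have FR : F%:R = 4 * K%:R - 2 :> rat by rewrite -natrM -FK natrD addrK.
have F2 : (F %% 4 = 2)%N by lia.
rewrite /ns4_formula F2 /=.
have -> : ((F + 1) %/ 8 = (K - 1) %/ 2)%N by lia.
have -> : ((F + 5) %/ 8 = K %/ 2)%N by lia.
by rewrite FR; field.
Qed.

Lemma region_size_1mod4_piecewise M q p : (0 < M)%N -> q = maxn 1 (M %/ 3) -> p = ((M - 1) %/ 2)%N ->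
  (\sum_(1 <= c < M.+1) ((minn M (2 * c + 1)).+1 - maxn 1 (M - c)))%:R =
  (p.+1%:R - q%:R) * (2 - M%:R) + 3 * (p.+1%:R * (p.+1%:R - 1) - q%:R * (q%:R - 1)) / 2
  + (M%:R - p.+1%:R) + (M%:R * (M%:R - 1) - p.+1%:R * (p.+1%:R - 1)) / 2 + M%:R :> rat.
Proof.
move=> M0 qE pE.
rewrite (@big_cat_nat _ _ _ q) 1?(@big_cat_nat _ _ _ p.+1 q) 1?(@big_cat_nat _ _ _ M p.+1); try lia.
rewrite /= !natrD.
rewrite (natr_sum_affine (al:=0) (be:=0) (ga:=0)); try lia.
rewrite (natr_sum_affine (al:=3) (be:=2) (ga:=M)); try lia.
rewrite (natr_sum_affine (al:=1) (be:=1) (ga:=0)); try lia.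
rewrite (natr_sum_affine (al:=0) (be:=M) (ga:=0)); try lia.
by field.
Qed.

Lemma region_size_1mod4 F M : F = (4 * M + 1)%N -> (0 < M)%N ->
  (\sum_(1 <= c < M.+1) ((minn M (2 * c + 1)).+1 - maxn 1 (M - c)))%:R = ns4_formula F.
Proof.
move=> FM M0; have F1 : (F %% 4 = 1)%N by lia.
have FR : F%:R = 4 * M%:R + 1 :> rat by rewrite FM natrD natrM.
rewrite /ns4_formula F1 /= FR.
have [M2|M2] := leqP M 2.
  rewrite ifT; last by lia.
  rewrite (region_size_1mod4_piecewise (q:=1) (p:=0)) //; try lia.
  by have [->|->] : M = 1%N \/ M = 2%N by lia; field.
have [M4|M4] := leqP M 4.
  rewrite ifF; last by lia.
  rewrite ifT; last by lia.
  rewrite (region_size_1mod4_piecewise (q:=1) (p:=1)) //; try lia.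
  by have [->|->] : M = 3%N \/ M = 4%N by lia; field.
rewrite ifF; last by lia.
rewrite ifF; last by lia.
rewrite ifT; last by lia.
rewrite (region_size_1mod4_piecewise (q:=(M %/ 3)%N) (p:=((M - 1) %/ 2)%N)) //; try lia.
have -> : ((F + 1) %/ 12 = M %/ 3)%N by lia.
have -> : ((F + 5) %/ 8 = ((M - 1) %/ 2).+1)%N by lia.
by field.
Qed.

Local Close Scope ring_scope.

Theorem mainTheorem10 (F : nat) (hF : (3 <= F)%N) :
  exists n : nat, NS_mult_frob 4 F #= `I_n /\ (n%:R : rat) = ns4_formula F.
Proof.
have card_NS R n : kunz_triples F #= R -> R #= `I_n -> NS_mult_frob 4 F #= `I_n.
  by move=> TR Rn; apply: card_eq_trans (card_NS_mult4_frob F) (card_eq_trans TR Rn).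
have : [|| F %% 4 == 0, F %% 4 == 1, F %% 4 == 2 | F %% 4 == 3] by lia.
case/or4P=> /eqP Fmod4.
- exists 0; split; last by rewrite /ns4_formula Fmod4.
  by apply: card_NS (card_eqxx _); rewrite kunz_triples_0mod4 // II0; apply: card_eq00.
- have FM : F = 4 * (F %/ 4) + 1 by lia.
  eexists; split; first exact: card_NS (card_kunz_triples_1mod4 FM) (card_lattice_region _ _ _ _).
  by apply: region_size_1mod4 FM _; lia.
- have FK : F + 2 = 4 * (F %/ 4).+1 by lia.
  eexists; split; first by apply: card_NS (card_kunz_triples_2mod4 FK _) (card_lattice_region _ _ _ _); lia.
  by apply: region_size_2mod4 FK _; lia.
- have FK : F + 1 = 4 * (F %/ 4).+1 by lia.
  eexists; split; first exact: card_NS (card_kunz_triples_3mod4 FK) (card_lattice_region _ _ _ _).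
  exact: region_size_3mod4 FK _.
Qed.
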